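(* Let $G=(V,E,I,\{s,t\})$ be an inner Eulerian grapht with $|E|\le\omega$ in which $s$ is linked. Then there is a linkage $\mathcal{P}$ of $s$ such that there is a family of pairwise edge-disjoint cycles in $G-E(\mathcal{P})$ covering $\delta_{G-E(\mathcal{P})}(t)$.
   Context: Graphs may have parallel edges but no loops; all paths finite. With terminal set $\{s,t\}$, the grapht is inner Eulerian if no $X\subseteq V\setminus\{s,t\}$ has the number of edges with exactly one end in $X$ equal to an odd natural number. $\delta(x)$ is the set of edges at $x$. A system of edge-disjoint $st$-paths links $s$ if it covers $\delta(s)$; $s$ is linked if such a system exists; a linkage of $s$ is a system linking $s$ in which each path contains an edge of $\delta(s)$. $E(\mathcal{P})$ is the union of edge sets of paths in $\mathcal{P}$. *)

From Stdlib Require Import List Arith.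
Import ListNotations.


(* A multigraph: every edge e has two distinct ends [end1 e], [end2 e];
   the incidence relation I is "x is an end of e". *)
Record multigraph := MkGraph {
  vtx : Type;
  edg : Type;
  end1 : edg -> vtx;
  end2 : edg -> vtx;
  noloop : forall e, end1 e <> end2 e
}.

Arguments end1 {_}.
Arguments end2 {_}.
Section Defs.
Variable G : multigraph.

Definition incident (e : edg G) (x : vtx G) : Prop := end1 e = x \/ end2 e = x.

Definition delta (x : vtx G) : edg G -> Prop := fun e => incident e x.

Definition joins (e : edg G) (u v : vtx G) : Prop :=
  (end1 e = u /\ end2 e = v) \/ (end1 e = v /\ end2 e = u).

Definition countable_edges : Prop :=
  exists f : edg G -> nat, forall e1 e2, f e1 = f e2 -> e1 = e2.

Definition cut (X : vtx G -> Prop) : edg G -> Prop :=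
  fun e => (X (end1 e) /\ ~ X (end2 e)) \/ (~ X (end1 e) /\ X (end2 e)).

Definition odd_finite (A : edg G -> Prop) : Prop :=
  exists l : list (edg G), NoDup l /\ (forall e, In e l <-> A e) /\ Nat.odd (length l) = true.

Definition inner_eulerian (s t : vtx G) : Prop :=
  forall X : vtx G -> Prop, ~ X s -> ~ X t -> ~ odd_finite (cut X).

(* [walk_from v es vs]: starting at v, traverse es = [e1;..;ek] visiting
   vs = [v1;..;vk], edge e_i joining v_{i-1} and v_i. *)
Fixpoint walk_from (v : vtx G) (es : list (edg G)) (vs : list (vtx G)) : Prop :=
  match es, vs with
  | [], [] => True
  | e :: es', w :: vs' => joins e v w /\ walk_from w es' vs'
  | _, _ => False
  end.

Record walk := MkWalk { wstart : vtx G; wedges : list (edg G); wverts : list (vtx G) }.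

Definition st_path (s t : vtx G) (p : walk) : Prop :=
  wstart p = s /\ walk_from s (wedges p) (wverts p) /\
  NoDup (s :: wverts p) /\ last (s :: wverts p) s = t.

(* a cycle: closed walk with distinct vertices and distinct edges
   (at least one edge; length 2 allowed for parallel edges) *)
Definition cycle (c : walk) : Prop :=
  walk_from (wstart c) (wedges c) (wverts c) /\
  wedges c <> [] /\ NoDup (wedges c) /\ NoDup (wverts c) /\
  last (wverts c) (wstart c) = wstart c.

Definition edge_disjoint_family (F : walk -> Prop) : Prop :=
  forall p q, F p -> F q -> p <> q ->
    forall e, In e (wedges p) -> ~ In e (wedges q).

Definition st_system (s t : vtx G) (P : walk -> Prop) : Prop :=
  (forall p, P p -> st_path s t p) /\ edge_disjoint_family P.

Definition sys_edges (P : walk -> Prop) : edg G -> Prop :=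
  fun e => exists p, P p /\ In e (wedges p).

Definition links_s (s t : vtx G) (P : walk -> Prop) : Prop :=
  st_system s t P /\ forall e, delta s e -> sys_edges P e.

Definition is_linked (s t : vtx G) : Prop := exists P, links_s s t P.

Definition linkage (s t : vtx G) (P : walk -> Prop) : Prop :=
  links_s s t P /\ forall p, P p -> exists e, In e (wedges p) /\ delta s e.

End Defs.
Arguments incident {G}. Arguments delta {G}. Arguments joins {G}.
Arguments cut {G}. Arguments odd_finite {G}. Arguments inner_eulerian {G}.
Arguments walk_from {G}. Arguments MkWalk {G}. Arguments wstart {G}.
Arguments wedges {G}. Arguments wverts {G}. Arguments st_path {G}.
Arguments cycle {G}. Arguments edge_disjoint_family {G}. Arguments st_system {G}.
Arguments sys_edges {G}. Arguments links_s {G}. Arguments is_linked {G}.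
Arguments linkage {G}.

(* The edges are settled one at a time along an enumeration.  A state consists of
   finitely many committed s-t paths and cycles avoiding [s], with pairwise distinct
   edges, together with a residual system [Q] of edge-disjoint s-t paths in the rest of
   the graph covering the remaining edges at [s].  An edge of [Q] is settled by
   committing its path.  A free edge [e = ut] is settled as follows: if [t] reaches [u]
   through free edges, these close a cycle through [e]; otherwise inner Eulerianity
   forces the set of vertices reaching [u] to meet a path [q] of [Q], and [q] is
   rerouted through that set and [e].  The committed paths and cycles of the resulting
   increasing chain of states form the linkage and the family of cycles. *)

From Stdlib Require Import List Arith Bool Permutation Classical ClassicalEpsilon.
Import ListNotations.

Lemma last_default {A : Type} (x : A) l d d' : last (x :: l) d = last (x :: l) d'.
Proof. revert x; induction l as [|y l IH]; intros x; [reflexivity|apply (IH y)]. Qed.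

Lemma last_cons_cons {A : Type} (x y : A) l d : last (x :: y :: l) d = last (y :: l) y.
Proof. change (last (y :: l) d = last (y :: l) y). apply last_default. Qed.

Lemma last_cons_self {A : Type} (x : A) l : last (x :: l) x = last l x.
Proof. now destruct l. Qed.

Lemma last_cons_app {A : Type} (x : A) l1 l2 d :
  last (x :: l1 ++ l2) d = last (last (x :: l1) d :: l2) d.
Proof.
  revert x; induction l1 as [|y l1 IH]; intros x; [reflexivity|].
  exact (IH y).
Qed.

Lemma In_last {A : Type} (x : A) l d : In (last (x :: l) d) (x :: l).
Proof.
  revert x; induction l as [|y l IH]; intros x; [now left|].
  right. exact (IH y).
Qed.

Lemma NoDup_app_disjoint {A : Type} (l1 l2 : list A) x :
  NoDup (l1 ++ l2) -> In x l1 -> ~ In x l2.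
Proof.
  induction l1 as [|y l1 IH]; intros Hnd Hx; [destruct Hx|].
  inversion Hnd as [|? ? Hy Hnd']; subst.
  destruct Hx as [<-|Hx]; [|now apply IH].
  intros Hx2. apply Hy, in_or_app. now right.
Qed.

Lemma NoDup_flat_map_disjoint {A B : Type} (f : A -> list B) l a b x :
  NoDup (flat_map f l) -> In a l -> In b l -> a <> b -> In x (f a) -> ~ In x (f b).
Proof.
  induction l as [|c l IH]; intros Hnd Ha Hb Hab Hxa Hxb; [destruct Ha|].
  simpl in Hnd. destruct Ha as [<-|Ha], Hb as [<-|Hb].
  - now apply Hab.
  - apply (NoDup_app_disjoint _ _ x Hnd Hxa), in_flat_map. now exists b.
  - apply (NoDup_app_disjoint _ _ x Hnd Hxb), in_flat_map. now exists a.
  - exact (IH (NoDup_app_remove_l _ _ Hnd) Ha Hb Hab Hxa Hxb).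
Qed.

Lemma even_filter_flat_map {A B : Type} (f : A -> list B) (b : B -> bool) l :
  (forall a, In a l -> Nat.even (length (filter b (f a))) = true) ->
  Nat.even (length (filter b (flat_map f l))) = true.
Proof.
  induction l as [|a l IH]; intros Hl; [reflexivity|]. simpl.
  rewrite filter_app, length_app, Nat.even_add, Hl, IH; [reflexivity| |now left].
  intros a' Ha'. apply Hl. now right.
Qed.

Definition asbool (P : Prop) : bool :=
  if excluded_middle_informative P then true else false.

Lemma asboolE (P : Prop) : asbool P = true <-> P.
Proof. unfold asbool. destruct (excluded_middle_informative P); intuition congruence. Qed.

Lemma asbool_false (P : Prop) : ~ P -> asbool P = false.
Proof. unfold asbool. now destruct (excluded_middle_informative P). Qed.

Section Walks.
Context {G : multigraph}.
Implicit Types (u v w x y : vtx G) (e g : edg G) (es : list (edg G)) (vs : list (vtx G)).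

Lemma joins_incident e u v : joins e u v -> incident e u.
Proof. unfold joins, incident; tauto. Qed.

Lemma incident_joins e v : incident e v -> exists u, joins e u v.
Proof.
  intros [Hv|Hv]; [exists (end2 e); right|exists (end1 e); left]; now split.
Qed.

Lemma walk_ends v es vs e :
  walk_from v es vs -> In e es -> In (end1 e) (v :: vs) /\ In (end2 e) (v :: vs).
Proof.
  revert v vs; induction es as [|a es IH]; intros v vs Hw He; [destruct He|].
  destruct vs as [|w vs]; [destruct Hw|]. destruct Hw as [Hj Hw].
  destruct He as [<-|He].
  - unfold joins in Hj. simpl. intuition.
  - destruct (IH _ _ Hw He). simpl in *. intuition.
Qed.

Lemma walk_nodup_edges v es vs : walk_from v es vs -> NoDup (v :: vs) -> NoDup es.
Proof.
  revert v vs; induction es as [|a es IH]; intros v vs Hw Hnd; [constructor|].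
  destruct vs as [|w vs]; [destruct Hw|]. destruct Hw as [Hj Hw].
  inversion Hnd as [|? ? Hv Hnd']; subst. constructor; [|eapply IH; eauto].
  intros Ha. destruct (walk_ends _ _ _ _ Hw Ha) as [H1 H2].
  destruct Hj as [[E _]|[_ E]]; rewrite E in *; auto.
Qed.

Lemma walk_incident_start v es vs g :
  walk_from v es vs -> NoDup (v :: vs) -> In g es -> incident g v ->
  exists es', es = g :: es'.
Proof.
  intros Hw Hnd Hg Hinc.
  destruct es as [|a es]; [destruct Hg|]. destruct vs as [|w vs]; [destruct Hw|].
  destruct Hw as [_ Hw]. inversion Hnd as [|? ? Hv _]; subst.
  destruct Hg as [<-|Hg]; [now exists es|].
  destruct (walk_ends _ _ _ _ Hw Hg). exfalso.
  destruct Hinc as [Hi|Hi]; rewrite Hi in *; auto.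
Qed.

Lemma walk_app v es1 vs1 es2 vs2 :
  walk_from v es1 vs1 -> walk_from (last (v :: vs1) v) es2 vs2 ->
  walk_from v (es1 ++ es2) (vs1 ++ vs2).
Proof.
  revert v vs1; induction es1 as [|a es1 IH]; intros v vs1 Hw1 Hw2.
  - destruct vs1; [exact Hw2|destruct Hw1].
  - destruct vs1 as [|w vs1]; [destruct Hw1|]. destruct Hw1 as [Hj Hw1].
    split; [exact Hj|]. apply IH; [exact Hw1|]. now rewrite <- (last_cons_cons v w vs1 v).
Qed.

Lemma walk_snoc v es vs e w :
  walk_from v es vs -> joins e (last (v :: vs) v) w ->
  walk_from v (es ++ [e]) (vs ++ [w]).
Proof. intros Hw Hj. apply walk_app; [exact Hw|]. now split. Qed.

Lemma walk_split v es vs x :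
  walk_from v es vs -> In x (v :: vs) ->
  exists es1 vs1 es2 vs2, es = es1 ++ es2 /\ vs = vs1 ++ vs2 /\
    walk_from v es1 vs1 /\ last (v :: vs1) v = x /\ walk_from x es2 vs2.
Proof.
  revert v vs; induction es as [|a es IH]; intros v vs Hw Hx.
  - destruct vs; [|destruct Hw]. destruct Hx as [<-|[]].
    now exists [], [], [], [].
  - destruct vs as [|w vs]; [destruct Hw|].
    destruct (classic (x = v)) as [->|Hxv]; [now exists [], [], (a :: es), (w :: vs)|].
    destruct Hw as [Hj Hw]. destruct Hx as [Hx|Hx]; [congruence|].
    destruct (IH _ _ Hw Hx) as (es1 & vs1 & es2 & vs2 & -> & -> & Hw1 & Hl & Hw2).
    exists (a :: es1), (w :: vs1), es2, vs2.
    repeat split; auto. now rewrite last_cons_cons.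
Qed.

Lemma walk_shorten v es vs :
  walk_from v es vs -> exists es' vs', walk_from v es' vs' /\ NoDup (v :: vs') /\
    last (v :: vs') v = last (v :: vs) v /\ incl es' es /\ incl vs' vs.
Proof.
  revert v vs; induction es as [|a es IH]; intros v vs Hw.
  - destruct vs; [|destruct Hw]. exists [], [].
    repeat split; try apply incl_refl. repeat constructor. intros [].
  - destruct vs as [|w vs]; [destruct Hw|]. destruct Hw as [Hj Hw].
    destruct (IH _ _ Hw) as (es' & vs' & Hw' & Hnd & Hl & Hes & Hvs).
    destruct (classic (In v (w :: vs'))) as [Hin|Hnin].
    + destruct (walk_split _ _ _ _ Hw' Hin)
        as (es1 & vs1 & es2 & vs2 & -> & Hvs' & _ & Hl1 & Hw2).
      exists es2, vs2. rewrite Hvs' in Hnd. change (NoDup ((w :: vs1) ++ vs2)) in Hnd.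
      repeat split.
      * exact Hw2.
      * constructor; [|exact (NoDup_app_remove_l _ _ Hnd)].
        apply (NoDup_app_disjoint _ _ _ Hnd). rewrite <- Hl1. apply In_last.
      * rewrite last_cons_cons, <- Hl, Hvs', last_cons_app, Hl1. apply last_default.
      * intros g Hg. right. apply Hes, in_or_app. now right.
      * intros y Hy. assert (Hy' : In y (w :: vs')) by (rewrite Hvs'; right; apply in_or_app; now right).
        destruct Hy' as [<-|Hy']; [now left|right; now apply Hvs].
    + exists (a :: es'), (w :: vs'). repeat split.
      * exact Hj.
      * exact Hw'.
      * now constructor.
      * rewrite !last_cons_cons. exact Hl.
      * apply incl_cons; [now left|]. now apply incl_tl.
      * apply incl_cons; [now left|]. now apply incl_tl.
Qed.

Lemma st_path_starts_at s t p :
  s <> t -> st_path s t p -> exists g es, wedges p = g :: es /\ incident g s.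
Proof.
  intros Hst (_ & Hw & _ & Hl).
  destruct (wedges p) as [|g es], (wverts p) as [|w vs]; try contradiction.
  exists g, es. split; [reflexivity|]. exact (joins_incident _ _ _ (proj1 Hw)).
Qed.

Lemma st_path_incident_start s t p g :
  st_path s t p -> In g (wedges p) -> incident g s -> exists es, wedges p = g :: es.
Proof. intros (_ & Hw & Hnd & _). exact (walk_incident_start _ _ _ _ Hw Hnd). Qed.

Definition reachable (A : edg G -> Prop) x y : Prop :=
  exists es vs, walk_from x es vs /\ last (x :: vs) x = y /\ forall g, In g es -> A g.

Lemma reachable_refl A x : reachable A x x.
Proof. exists [], []. repeat split. intros g []. Qed.

Lemma reachable_cons A g x y u : joins g x y -> A g -> reachable A y u -> reachable A x u.
Proof.
  intros Hj Hg (es & vs & Hw & Hl & HA). exists (g :: es), (y :: vs).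
  repeat split; auto.
  - now rewrite last_cons_cons.
  - intros h [<-|Hh]; auto.
Qed.

Lemma reachable_walk_verts A x es vs u :
  walk_from x es vs -> last (x :: vs) x = u -> (forall g, In g es -> A g) ->
  forall y, In y (x :: vs) -> reachable A y u.
Proof.
  revert x vs; induction es as [|a es IH]; intros x vs Hw Hl HA y Hy.
  - destruct vs; [|destruct Hw]. destruct Hy as [<-|[]]. rewrite <- Hl. apply reachable_refl.
  - destruct vs as [|w vs]; [destruct Hw|]. destruct Hw as [Hj Hw].
    rewrite last_cons_cons in Hl.
    assert (Hw_reach : forall z, In z (w :: vs) -> reachable A z u)
      by (apply (IH w vs Hw Hl); intros g Hg; apply HA; now right).
    destruct Hy as [<-|Hy]; [|now apply Hw_reach].
    apply (reachable_cons A a x w u Hj); [apply HA; now left|]. apply Hw_reach. now left.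
Qed.

Lemma reachable_source A v u :
  (forall g, A g -> ~ incident g v) -> reachable A v u -> u = v.
Proof.
  intros Hv (es & vs & Hw & Hl & HA).
  destruct es as [|g es], vs as [|w vs]; try contradiction; [now symmetry|].
  exfalso. apply (Hv g); [apply HA; now left|]. exact (joins_incident _ _ _ (proj1 Hw)).
Qed.

Lemma cut_reachable A u g : cut (fun x => reachable A x u) g -> ~ A g.
Proof.
  intros [[H1 H2]|[H1 H2]] Hg; [apply H2|apply H1].
  - apply (reachable_cons A g _ (end1 g)); [right; now split|exact Hg|exact H1].
  - apply (reachable_cons A g _ (end2 g)); [left; now split|exact Hg|exact H2].
Qed.

Lemma reachable_close_cycle A v u e :
  reachable A v u -> joins e u v -> ~ A e ->
  exists c, cycle c /\ In e (wedges c) /\ forall g, In g (wedges c) -> A g \/ g = e.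
Proof.
  intros (es & vs & Hw & Hl & HA) Hj He.
  destruct (walk_shorten _ _ _ Hw) as (es' & vs' & Hw' & Hnd & Hl' & Hes & _).
  rewrite Hl in Hl'.
  exists (MkWalk v (es' ++ [e]) (vs' ++ [v])). unfold cycle; cbn [wstart wedges wverts]. repeat split.
  - apply walk_snoc; [exact Hw'|]. now rewrite Hl'.
  - now destruct es'.
  - apply NoDup_app; [exact (walk_nodup_edges _ _ _ Hw' Hnd)|repeat constructor; intros []|].
    intros g Hg [->|[]]. exact (He (HA g (Hes g Hg))).
  - inversion Hnd as [|? ? Hv Hnd']; subst.
    apply NoDup_app; [exact Hnd'|repeat constructor; intros []|].
    intros y Hy [<-|[]]. exact (Hv Hy).
  - apply last_last.
  - apply in_or_app. right. now left.
  - intros g Hg. apply in_app_or in Hg. destruct Hg as [Hg|[<-|[]]]; [|now right].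
    left. exact (HA g (Hes g Hg)).
Qed.

(* Follow [q] from [s] up to a vertex [x] that reaches [u], go on to [u], and close
   with [e]; the shortened walk avoids [t] because [t] ends [q] and does not reach [u]. *)
Lemma reroute_path A s t q x u e :
  st_path s t q -> In x (s :: wverts q) -> reachable A x u -> ~ reachable A t u ->
  joins e u t ->
  exists q', st_path s t q' /\ In e (wedges q') /\
    forall g, In g (wedges q') -> In g (wedges q) \/ A g \/ g = e.
Proof.
  intros (_ & Hw & Hnd & Hl) Hx (esX & vsX & HwX & HlX & HA) Ht Hj.
  destruct (walk_split _ _ _ _ Hw Hx) as (es1 & vs1 & es2 & vs2 & Hes & Hvs & Hw1 & Hl1 & _).
  assert (Hwa : walk_from s (es1 ++ esX) (vs1 ++ vsX)) by (apply walk_app; [|rewrite Hl1]; assumption).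
  destruct (walk_shorten _ _ _ Hwa) as (es' & vs' & Hw' & Hnd' & Hl' & Hes' & Hvs').
  rewrite last_cons_app, Hl1, (last_default x vsX s x), HlX in Hl'.
  assert (Ht_prefix : ~ In t (s :: vs1)).
  { rewrite Hvs in Hnd, Hl. change (NoDup ((s :: vs1) ++ vs2)) in Hnd.
    rewrite last_cons_app, Hl1 in Hl. intros Hin. destruct vs2 as [|y vs2].
    - apply Ht. simpl in Hl. rewrite <- Hl. exists esX, vsX. now repeat split.
    - apply (NoDup_app_disjoint _ _ _ Hnd Hin). rewrite <- Hl, last_cons_cons. apply In_last. }
  assert (Ht' : ~ In t (s :: vs')).
  { intros [Hts|Hin]; [apply Ht_prefix; now left|].
    apply Hvs', in_app_or in Hin. destruct Hin as [Hin|Hin]; [apply Ht_prefix; now right|].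
    apply Ht. apply (reachable_walk_verts A x esX vsX u HwX HlX HA). now right. }
  exists (MkWalk s (es' ++ [e]) (vs' ++ [t])). unfold st_path; cbn [wstart wedges wverts]. repeat split.
  - apply walk_snoc; [exact Hw'|]. now rewrite Hl'.
  - change (NoDup ((s :: vs') ++ [t])). apply NoDup_app; [exact Hnd'|repeat constructor; intros []|].
    intros y Hy [<-|[]]. exact (Ht' Hy).
  - change (last ((s :: vs') ++ [t]) s = t). apply last_last.
  - apply in_or_app. right. now left.
  - intros g Hg. apply in_app_or in Hg. destruct Hg as [Hg|[<-|[]]]; [|now right; right].
    apply Hes', in_app_or in Hg. destruct Hg as [Hg|Hg].
    + left. rewrite Hes. apply in_or_app. now left.
    + right. left. exact (HA g Hg).
Qed.

Definition cutb (X : vtx G -> Prop) e : bool :=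
  xorb (asbool (X (end1 e))) (asbool (X (end2 e))).

Lemma cutbE X e : cutb X e = true <-> cut X e.
Proof.
  unfold cutb, cut. pose proof (asboolE (X (end1 e))). pose proof (asboolE (X (end2 e))).
  destruct (asbool (X (end1 e))), (asbool (X (end2 e))); simpl; intuition congruence.
Qed.

Lemma walk_cut_parity X v es vs :
  walk_from v es vs ->
  Nat.even (length (filter (cutb X) es)) =
    Bool.eqb (asbool (X v)) (asbool (X (last (v :: vs) v))).
Proof.
  revert v vs; induction es as [|a es IH]; intros v vs Hw.
  - destruct vs; [|destruct Hw]. simpl. now destruct (asbool (X v)).
  - destruct vs as [|w vs]; [destruct Hw|]. destruct Hw as [Hj Hw].
    rewrite last_cons_cons. specialize (IH _ _ Hw).
    assert (Ha : cutb X a = xorb (asbool (X v)) (asbool (X w)))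
      by (unfold cutb; destruct Hj as [[-> ->]|[-> ->]]; [|apply xorb_comm]; reflexivity).
    change (filter (cutb X) (a :: es))
      with (if cutb X a then a :: filter (cutb X) es else filter (cutb X) es).
    rewrite Ha. destruct (xorb _ _) eqn:Hcross;
      [rewrite length_cons, Nat.even_succ, <- Nat.negb_even|]; rewrite IH;
      destruct (asbool (X v)), (asbool (X w)), (asbool (X (last (w :: vs) w)));
      simpl in *; congruence.
Qed.

End Walks.

Section Augmentation.
Context {G : multigraph}.
Variables s t : vtx G.
Hypothesis s_neq_t : s <> t.
Hypothesis eulerian : inner_eulerian s t.

Record state := MkState { paths : list (walk G); cycles : list (walk G) }.

Definition used_edges (st : state) : list (edg G) :=
  flat_map wedges (paths st) ++ flat_map wedges (cycles st).

Definition residual (st : state) (Q : walk G -> Prop) : Prop :=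
  st_system s t Q /\
  (forall g, sys_edges Q g -> ~ In g (used_edges st)) /\
  (forall g, delta s g -> ~ In g (used_edges st) -> sys_edges Q g).

Definition admissible (st : state) : Prop :=
  (forall p, In p (paths st) -> st_path s t p) /\
  (forall c, In c (cycles st) -> cycle c /\ forall g, In g (wedges c) -> ~ delta s g) /\
  NoDup (used_edges st) /\ exists Q, residual st Q.

Definition free (st : state) (Q : walk G -> Prop) (g : edg G) : Prop :=
  ~ In g (used_edges st) /\ ~ sys_edges Q g.

Definition extends (st st' : state) : Prop :=
  incl (paths st) (paths st') /\ incl (cycles st) (cycles st').

Definition handled (e : edg G) (st : state) : Prop :=
  (delta s e -> In e (flat_map wedges (paths st))) /\ (delta t e -> In e (used_edges st)).

Lemma used_edges_add_path p P C :
  used_edges (MkState (p :: P) C) = wedges p ++ used_edges (MkState P C).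
Proof. unfold used_edges. simpl. now rewrite app_assoc. Qed.

Lemma used_edges_add_cycle c P C :
  Permutation (used_edges (MkState P (c :: C))) (wedges c ++ used_edges (MkState P C)).
Proof. unfold used_edges. simpl. apply Permutation_app_swap_app. Qed.

Lemma free_not_at_s st Q g : residual st Q -> free st Q g -> ~ delta s g.
Proof. intros (_ & _ & Hcov) [Hu HQ] Hs. exact (HQ (Hcov g Hs Hu)). Qed.

Lemma admissible_initial P0 : links_s s t P0 -> admissible (MkState [] []).
Proof.
  intros [Hsys Hcov].
  split; [intros ? []|]. split; [intros ? []|]. split; [constructor|].
  exists P0. split; [exact Hsys|]. split; [intros g _ []|].
  intros g Hs _. now apply Hcov.
Qed.

Lemma admissible_add_cycle st Q c :
  admissible st -> residual st Q -> cycle c -> (forall g, In g (wedges c) -> free st Q g) ->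
  admissible (MkState (paths st) (c :: cycles st)).
Proof.
  destruct st as [P C]. intros (HP & HC & Hnd & _) HQ Hc Hfree.
  pose proof HQ as (Hsys & Hdisj & Hcov).
  assert (Hused : forall g, In g (used_edges (MkState P (c :: C))) <->
                            In g (wedges c) \/ In g (used_edges (MkState P C))).
  { intros g. rewrite <- in_app_iff. split; apply Permutation_in;
      [|symmetry]; apply used_edges_add_cycle. }
  split; [exact HP|]. split; [|split].
  - intros c' [<-|Hc']; [|now apply HC]. split; [exact Hc|].
    intros g Hg. exact (free_not_at_s _ _ _ HQ (Hfree g Hg)).
  - apply (Permutation_NoDup (Permutation_sym (used_edges_add_cycle c P C))).
    apply NoDup_app; [apply Hc|exact Hnd|]. intros g Hg. apply (Hfree g Hg).
  - exists Q. split; [exact Hsys|]. split.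
    + intros g Hg [Hc'|Hu]%Hused; [exact (proj2 (Hfree g Hc') Hg)|exact (Hdisj g Hg Hu)].
    + intros g Hs Hu. apply Hcov; [exact Hs|]. intros Hu'. apply Hu, Hused. now right.
Qed.

(* The first edge of [q'] is at [s], hence not free, hence in [q]; but the only edge of
   [q] at [s] is its first one. *)
Lemma replace_path_keeps_s_edge st Q q q' g :
  residual st Q -> Q q -> st_path s t q' ->
  (forall g, In g (wedges q') -> In g (wedges q) \/ free st Q g) ->
  In g (wedges q) -> delta s g -> In g (wedges q').
Proof.
  intros HQ Hq Hq' Hedges Hgq Hs.
  pose proof (proj1 (proj1 HQ) q Hq) as Hqpath.
  destruct (st_path_starts_at _ _ _ s_neq_t Hq') as (g0 & es & Hq'es & Hg0).
  destruct (st_path_incident_start _ _ _ _ Hqpath Hgq Hs) as (es1 & Hq1).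
  rewrite Hq'es. left.
  destruct (Hedges g0) as [Hg0q|Hfree]; [rewrite Hq'es; now left| |].
  - destruct (st_path_incident_start _ _ _ _ Hqpath Hg0q Hg0) as (es2 & Hq2). congruence.
  - exfalso. exact (free_not_at_s _ _ _ HQ Hfree Hg0).
Qed.

Lemma admissible_replace_path st Q q q' :
  admissible st -> residual st Q -> Q q -> st_path s t q' ->
  (forall g, In g (wedges q') -> In g (wedges q) \/ free st Q g) ->
  admissible (MkState (q' :: paths st) (cycles st)).
Proof.
  destruct st as [P C]. intros (HP & HC & Hnd & _) HQ Hq Hq' Hedges.
  pose proof HQ as ((Hpaths & HQdisj) & Hdisj & Hcov).
  split; [intros p [<-|Hp]; auto|]. split; [exact HC|]. split.
  - rewrite used_edges_add_path. apply NoDup_app; [|exact Hnd|].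
    + destruct Hq' as (_ & Hw & Hndv & _). exact (walk_nodup_edges _ _ _ Hw Hndv).
    + intros g Hg. destruct (Hedges g Hg) as [Hgq|[Hu _]]; [|exact Hu].
      apply Hdisj. now exists q.
  - exists (fun r => Q r /\ r <> q). split; [split|split].
    + intros r [Hr _]. now apply Hpaths.
    + intros p r [Hp _] [Hr _]. now apply HQdisj.
    + intros g (r & [Hr Hrq] & Hgr). rewrite used_edges_add_path. intros [Hg|Hu]%in_app_iff.
      * destruct (Hedges g Hg) as [Hgq|[_ HgQ]].
        -- exact (HQdisj r q Hr Hq Hrq g Hgr Hgq).
        -- apply HgQ. now exists r.
      * apply (Hdisj g); [now exists r|exact Hu].
    + intros g Hs. rewrite used_edges_add_path. intros Hu.
      destruct (Hcov g Hs) as (r & Hr & Hgr); [intros Hu'; apply Hu, in_or_app; now right|].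
      exists r. split; [split; [exact Hr|]|exact Hgr]. intros ->.
      apply Hu, in_or_app. left. exact (replace_path_keeps_s_edge _ Q q q' g HQ Hq Hq' Hedges Hgr Hs).
Qed.

Lemma used_edges_cut_even st X :
  admissible st -> ~ X s -> ~ X t -> Nat.even (length (filter (cutb X) (used_edges st))) = true.
Proof.
  intros (HP & HC & _) Hs Ht. unfold used_edges. rewrite <- flat_map_app.
  apply even_filter_flat_map. intros w [Hw|Hw]%in_app_or.
  - destruct (HP w Hw) as (_ & Hwalk & _ & Hl).
    rewrite (walk_cut_parity X _ _ _ Hwalk), Hl, (asbool_false _ Hs), (asbool_false _ Ht).
    reflexivity.
  - destruct (HC w Hw) as ((Hwalk & _ & _ & _ & Hl) & _).
    rewrite (walk_cut_parity X _ _ _ Hwalk), last_cons_self, Hl. apply eqb_reflx.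
Qed.

(* Otherwise the set [X] of vertices reaching [u] along free edges other than [e] avoids
   [s] and [t] and its cut consists of [e] and used edges; every committed path and cycle
   crosses the cut an even number of times, so the cut would be odd. *)
Lemma residual_meets_reachable st Q e u :
  admissible st -> residual st Q -> free st Q e -> joins e u t ->
  let A := fun g => free st Q g /\ g <> e in
  ~ reachable A t u ->
  exists q x, Q q /\ In x (s :: wverts q) /\ reachable A x u.
Proof.
  intros Hadm HQ He Hj A Ht. apply NNPP. intros Hmiss.
  pose proof Hadm as (_ & _ & Hnd & _).
  set (X := fun x => reachable A x u).
  assert (Hs : ~ X s).
  { intros HXs. apply (free_not_at_s _ _ _ HQ He).
    rewrite <- (reachable_source A s u); [exact (joins_incident _ _ _ Hj)| |exact HXs].
    intros g [Hg _]. exact (free_not_at_s _ _ _ HQ Hg). }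
  apply (eulerian X Hs Ht). exists (e :: filter (cutb X) (used_edges st)). split; [|split].
  - constructor; [|exact (NoDup_filter _ Hnd)].
    intros [Hu _]%filter_In. exact (proj1 He Hu).
  - intros g. split.
    + intros [<-|[_ Hg]%filter_In]; [|now apply cutbE].
      unfold cut. destruct Hj as [[-> ->]|[-> ->]]; [left|right]; split; auto; apply reachable_refl.
    + intros Hcut.
      destruct (classic (In g (used_edges st))) as [Hu|Hu];
        [right; apply filter_In; split; [exact Hu|now apply cutbE]|].
      destruct (classic (g = e)) as [->|Hge]; [now left|exfalso].
      destruct (classic (sys_edges Q g)) as [(r & Hr & Hgr)|HgQ].
      * destruct (proj1 (proj1 HQ) r Hr) as (<- & Hw & _).
        destruct (walk_ends _ _ _ _ Hw Hgr) as [H1 H2].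
        destruct Hcut as [[HX _]|[_ HX]]; apply Hmiss; eauto.
      * exact (cut_reachable A u g Hcut (conj (conj Hu HgQ) Hge)).
  - cbn [length]. rewrite Nat.odd_succ. exact (used_edges_cut_even st X Hadm Hs Ht).
Qed.

Lemma augment_at_t st Q e u :
  admissible st -> residual st Q -> free st Q e -> joins e u t ->
  exists st', admissible st' /\ extends st st' /\ In e (used_edges st').
Proof.
  intros Hadm HQ He Hj. set (A := fun g => free st Q g /\ g <> e).
  assert (Hfree : forall g, A g \/ g = e -> free st Q g) by (intros g [[Hg _]| ->]; assumption).
  destruct (classic (reachable A t u)) as [Ht|Ht].
  - destruct (reachable_close_cycle A t u e Ht Hj) as (c & Hc & Hec & Hedges);
      [intros [_ Hne]; now apply Hne|].
    exists (MkState (paths st) (c :: cycles st)). split; [|split].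
    + apply (admissible_add_cycle _ Q); auto.
    + split; [apply incl_refl|apply incl_tl, incl_refl].
    + apply (Permutation_in _ (Permutation_sym (used_edges_add_cycle _ _ _))).
      apply in_or_app. now left.
  - destruct (residual_meets_reachable st Q e u Hadm HQ He Hj Ht) as (q & x & Hq & Hx & HXx).
    destruct (reroute_path A s t q x u e) as (q' & Hq' & Heq' & Hedges); auto.
    { exact (proj1 (proj1 HQ) q Hq). }
    exists (MkState (q' :: paths st) (cycles st)). split; [|split].
    + apply (admissible_replace_path _ Q q); auto.
      intros g Hg. destruct (Hedges g Hg) as [Hgq|Hg']; [now left|right; now apply Hfree].
    + split; [apply incl_tl, incl_refl|apply incl_refl].
    + rewrite used_edges_add_path. apply in_or_app. now left.
Qed.

Lemma handled_of_used st e : admissible st -> In e (used_edges st) -> handled e st.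
Proof.
  intros (_ & HC & _) He. split; [|intros _; exact He].
  intros Hs. apply in_app_or in He. destruct He as [He|He]; [exact He|exfalso].
  apply in_flat_map in He. destruct He as (c & Hc & Hec). exact (proj2 (HC c Hc) e Hec Hs).
Qed.

Lemma augment st e :
  admissible st -> exists st', admissible st' /\ extends st st' /\ handled e st'.
Proof.
  intros Hadm. pose proof Hadm as (_ & _ & _ & Q & HQ).
  destruct (classic (In e (used_edges st))) as [Hu|Hu].
  { exists st. split; [exact Hadm|]. split; [split; apply incl_refl|].
    now apply handled_of_used. }
  destruct (classic (sys_edges Q e)) as [(q & Hq & Heq)|HeQ].
  { assert (Hadm' : admissible (MkState (q :: paths st) (cycles st))).
    { apply (admissible_replace_path _ Q q); auto. exact (proj1 (proj1 HQ) q Hq). }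
    exists (MkState (q :: paths st) (cycles st)). split; [exact Hadm'|]. split.
    - split; [apply incl_tl, incl_refl|apply incl_refl].
    - apply handled_of_used; [exact Hadm'|].
      rewrite used_edges_add_path. apply in_or_app. now left. }
  assert (He : free st Q e) by now split.
  assert (Hes : ~ delta s e) by exact (free_not_at_s _ _ _ HQ He).
  destruct (classic (delta t e)) as [Ht|Ht].
  - destruct (incident_joins _ _ Ht) as [u Hj].
    destruct (augment_at_t st Q e u Hadm HQ He Hj) as (st' & Hadm' & Hext & Hu').
    exists st'. split; [exact Hadm'|]. split; [exact Hext|].
    split; [intros Hs; now destruct (Hes Hs)|now intros _].
  - exists st. split; [exact Hadm|]. split; [split; apply incl_refl|].
    split; [intros Hs; now destruct (Hes Hs)|now intros Ht'].
Qed.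

Lemma augment_sequence st0 :
  countable_edges G -> admissible st0 ->
  exists stage : nat -> state,
    (forall n, admissible (stage n)) /\
    (forall m n, m <= n -> extends (stage m) (stage n)) /\
    (forall e, exists n, handled e (stage n)).
Proof.
  intros [f Hf] Hadm0.
  assert (Hstep : forall stn : state * nat, exists st',
             admissible (fst stn) ->
             admissible st' /\ extends (fst stn) st' /\ forall e, f e = snd stn -> handled e st').
  { intros [st n]. destruct (classic (admissible st)) as [Hadm|]; [|now exists st].
    destruct (classic (exists e, f e = n)) as [[e He]|Hn].
    - destruct (augment st e Hadm) as (st' & Hadm' & Hext & Hhd).
      exists st'. intros _. split; [exact Hadm'|]. split; [exact Hext|].
      intros e' He'. simpl in He'. rewrite (Hf e' e) by congruence. exact Hhd.
    - exists st. intros _. split; [exact Hadm|]. split; [split; apply incl_refl|].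
      intros e He. exfalso. eauto. }
  destruct (choice _ Hstep) as [next Hnext].
  set (stage := nat_rect (fun _ => state) st0 (fun m st => next (st, m))).
  assert (Hadm : forall n, admissible (stage n)).
  { induction n as [|n IH]; [exact Hadm0|]. exact (proj1 (Hnext (stage n, n) IH)). }
  assert (Hsucc : forall n, extends (stage n) (stage (S n)) /\
                            forall e, f e = n -> handled e (stage (S n)))
    by (intros n; exact (proj2 (Hnext (stage n, n) (Hadm n)))).
  exists stage. split; [exact Hadm|]. split.
  - intros m n Hmn. induction Hmn as [|n _ [IH1 IH2]]; [split; apply incl_refl|].
    destruct (proj1 (Hsucc n)) as [H1 H2]. split; eapply incl_tran; eauto.
  - intros e. exists (S (f e)). now apply Hsucc.
Qed.

Section Limit.
Variable stage : nat -> state.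
Hypothesis stage_admissible : forall n, admissible (stage n).
Hypothesis stage_mono : forall m n, m <= n -> extends (stage m) (stage n).
Hypothesis stage_handles : forall e, exists n, handled e (stage n).

Definition limit_paths (p : walk G) : Prop := exists n, In p (paths (stage n)).
Definition limit_cycles (c : walk G) : Prop := exists n, In c (cycles (stage n)).

Lemma limit_edge_disjoint (sel : state -> list (walk G)) :
  (forall n, NoDup (flat_map wedges (sel (stage n)))) ->
  (forall m n, m <= n -> incl (sel (stage m)) (sel (stage n))) ->
  edge_disjoint_family (fun w => exists n, In w (sel (stage n))).
Proof.
  intros Hnd Hmono p q [m Hp] [n Hq] Hpq e.
  apply (NoDup_flat_map_disjoint wedges (sel (stage (max m n)))); [exact (Hnd _)| | |exact Hpq].
  - exact (Hmono m _ (Nat.le_max_l m n) p Hp).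
  - exact (Hmono n _ (Nat.le_max_r m n) q Hq).
Qed.

Lemma limit_paths_cycles_disjoint p c e :
  limit_paths p -> limit_cycles c -> In e (wedges p) -> ~ In e (wedges c).
Proof.
  intros [m Hp] [n Hc] Hep Hec. destruct (stage_admissible (max m n)) as (_ & _ & Hnd & _).
  apply (NoDup_app_disjoint _ _ e Hnd); apply in_flat_map.
  - exists p. split; [|exact Hep]. exact (proj1 (stage_mono m _ (Nat.le_max_l m n)) p Hp).
  - exists c. split; [|exact Hec]. exact (proj2 (stage_mono n _ (Nat.le_max_r m n)) c Hc).
Qed.

Lemma limit_paths_linkage : linkage s t limit_paths.
Proof.
  split; [split; [split|]|].
  - intros p [n Hp]. exact (proj1 (stage_admissible n) p Hp).
  - apply limit_edge_disjoint.
    + intros n. destruct (stage_admissible n) as (_ & _ & Hnd & _).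
      exact (NoDup_app_remove_r _ _ Hnd).
    + intros m n Hmn. apply stage_mono, Hmn.
  - intros e Hs. destruct (stage_handles e) as [n [Hn _]].
    destruct (proj1 (in_flat_map _ _ _) (Hn Hs)) as (p & Hp & Hep).
    exists p. split; [now exists n|exact Hep].
  - intros p [n Hp].
    destruct (st_path_starts_at s t p s_neq_t (proj1 (stage_admissible n) p Hp))
      as (g & es & Hes & Hg).
    exists g. rewrite Hes. split; [now left|exact Hg].
Qed.

Lemma limit_cycles_cycle c :
  limit_cycles c -> cycle c /\ forall e, In e (wedges c) -> ~ sys_edges limit_paths e.
Proof.
  intros Hc. pose proof Hc as [n Hn].
  split; [exact (proj1 (proj1 (proj2 (stage_admissible n)) c Hn))|].
  intros e Hec (p & Hp & Hep). exact (limit_paths_cycles_disjoint p c e Hp Hc Hep Hec).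
Qed.

Lemma limit_cycles_edge_disjoint : edge_disjoint_family limit_cycles.
Proof.
  apply limit_edge_disjoint.
  - intros n. destruct (stage_admissible n) as (_ & _ & Hnd & _).
    exact (NoDup_app_remove_l _ _ Hnd).
  - intros m n Hmn. apply stage_mono, Hmn.
Qed.

Lemma limit_cycles_cover_t e :
  delta t e -> ~ sys_edges limit_paths e -> exists c, limit_cycles c /\ In e (wedges c).
Proof.
  intros Ht HeP. destruct (stage_handles e) as [n [_ Hn]].
  destruct (in_app_or _ _ _ (Hn Ht)) as [He|He];
    destruct (proj1 (in_flat_map _ _ _) He) as (w & Hw & Hew).
  - exfalso. apply HeP. exists w. split; [now exists n|exact Hew].
  - exists w. split; [now exists n|exact Hew].
Qed.

End Limit.
End Augmentation.

Theorem lemma6p2 (G : multigraph) (s t : vtx G) :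
  s <> t ->
  inner_eulerian s t ->
  countable_edges G ->
  is_linked s t ->
  exists P : walk G -> Prop,
    linkage s t P /\
    exists C : walk G -> Prop,
      (forall c, C c -> cycle c /\
         forall e, In e (wedges c) -> ~ sys_edges P e) /\
      edge_disjoint_family C /\
      (forall e, delta t e -> ~ sys_edges P e ->
         exists c, C c /\ In e (wedges c)).
Proof.
  intros Hst Heul Hcount [P0 HP0].
  destruct (augment_sequence s t Hst Heul _ Hcount (admissible_initial s t P0 HP0))
    as (stage & Hadm & Hmono & Hhandled).
  exists (limit_paths stage). split.
  - exact (limit_paths_linkage s t Hst stage Hadm Hmono Hhandled).
  - exists (limit_cycles stage). split; [|split].
    + exact (limit_cycles_cycle s t stage Hadm Hmono).
    + exact (limit_cycles_edge_disjoint s t stage Hadm Hmono).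
    + exact (limit_cycles_cover_t s t stage Hhandled).
Qed.
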